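(* Let $K$ be an alphabet space and $\sigma:K\to K^+$ a primitive generalized substitution. Then for any two letters $a,b\in K$, $\mathcal L(\sigma,a)=\mathcal L(\sigma,b)=\mathcal L(\sigma)$.
   Context: An alphabet space is a compact zero-dimensional metric space $K$ with at least two points; $K^n$ is the set of words of length $n$ with the product topology, $K^+=\bigcup_{n\ge1}K^n$. A generalized substitution is a map $\sigma:K\to K^+$ with $a\mapsto|\sigma(a)|$ continuous and, for each $j$, $a\mapsto$ ($j$-th letter of $\sigma(a)$) continuous on $\{a:|\sigma(a)|\ge j\}$; it is extended to words by concatenation. $\sigma$ is primitive if for every nonempty open $V\subset K$ there is $j$ such that for all $a\in K$ and $k\ge j$ some letter of $\sigma^k(a)$ lies in $V$. $\mathcal L(\sigma,a)$ is the set of words $w\in K^+$ that are subwords of $\sigma^j(a)$ for some $j\in\mathbb N$, or are limits in $K^{|w|}$ of such words; $\mathcal L(\sigma)=\bigcup_{a\in K}\mathcal L(\sigma,a)$. *)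

From HB Require Import structures.
From mathcomp Require Import all_boot all_order all_algebra.
From mathcomp Require Import all_classical all_reals all_analysis.
Set Implicit Arguments. Unset Strict Implicit. Unset Printing Implicit Defensive.
Import Order.TTheory GRing.Theory Num.Theory.
Local Open Scope classical_set_scope.

Definition zero_dim (T : topologicalType) : Prop :=
  forall (x : T) (U : set T), nbhs x U ->
    exists V : set T, [/\ clopen V, V x & V `<=` U].

Definition alphabet_space (R : realType) (K : metricType R) : Prop :=
  [/\ compact [set: K], zero_dim K & exists a b : K, a != b].

Definition subst_word (K : Type) (sigma : K -> seq K) (w : seq K) : seq K :=
  flatten (map sigma w).

Definition subst_iter (K : Type) (sigma : K -> seq K) (k : nat) (a : K) : seq K :=
  iter k (subst_word sigma) [:: a].

Definition gen_subst (K : topologicalType) (sigma : K -> seq K) : Prop :=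
  [/\ (forall a, 0 < size (sigma a))%N,
      (* a |-> |sigma a| continuous into the discrete space N *)
      (forall a : K, \forall x \near a, size (sigma x) = size (sigma a)) &
      (forall (j : nat) (d : K),
         {within [set a | (j < size (sigma a))%N],
            continuous (fun a => nth d (sigma a) j)})].

Definition primitive (K : topologicalType) (sigma : K -> seq K) : Prop :=
  forall V : set K, open V -> V !=set0 ->
    exists j : nat, forall (a : K) (k : nat), (j <= k)%N ->
      exists2 x, x \in subst_iter sigma k a & V x.

Definition word_of (K : Type) (n : nat) (f : 'I_n -> K) : seq K :=
  [seq f i | i <- enum 'I_n].

(* L(sigma, a): nonempty words that are subwords (factors) of some sigma^j(a),
   or limits in K^n (product topology) of such words *)
Definition lang_at (K : topologicalType) (sigma : K -> seq K) (a : K) : set (seq K) :=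
  [set w | exists (n : nat) (f : 'I_n -> K),
     [/\ (0 < n)%N, w = word_of f &
         closure [set g : {ptws 'I_n -> K} |
                   exists j : nat, infix (word_of g) (subst_iter sigma j a)]
                 (f : {ptws 'I_n -> K})]].

Definition lang (K : topologicalType) (sigma : K -> seq K) : set (seq K) :=
  \bigcup_(a in [set: K]) lang_at sigma a.

From HB Require Import structures.
From mathcomp Require Import all_boot all_order all_algebra.
From mathcomp Require Import all_classical all_reals all_analysis.
From mathcomp Require Import zify.
Local Open Scope classical_set_scope.
Set Implicit Arguments.

(* The map x |-> sigma^j(x) has locally constant length and
   continuous letters, so each window of fixed position and length in
   sigma^j(x) depends continuously on x.  Hence if w occurs in sigma^j(a), every
   neighbourhood of w contains a window of sigma^j(x) for all x in some open
   V containing a.  By primitivity some sigma^k(b) has a letter x in V, and then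
   that window is a factor of sigma^(j+k)(b).  So every word of L(sigma, a)
   lies in the closure of the factors of the sigma^m(b), i.e. in
   L(sigma, b), and the languages of all letters coincide. *)

Lemma ptws_cvgP (T : topologicalType) (n : nat) (F : set_system {ptws 'I_n -> T})
    (f : {ptws 'I_n -> T}) : Filter F ->
  (forall i, (fun g : {ptws 'I_n -> T} => g i) @ F --> f i) -> F --> f.
Proof.
move=> FF cvg_coord; apply/cvg_sup => i.
have surj_eval : range (fun g : 'I_n -> T => g i) = setT.
  by apply/seteqP; split => // y _; exists (fun _ => y).
apply/cvg_image => // W /= hW.
exists ((fun g : {ptws 'I_n -> T} => g i) @^-1` W); first exact: cvg_coord.
exact: image_preimage.
Qed.

Lemma continuous_near_eq (T U : topologicalType) (f g : T -> U) (a : T) :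
  (\forall x \near a, f x = g x) -> {for a, continuous g} -> {for a, continuous f}.
Proof.
move=> fg gc; have fa : f a = g a := nbhs_singleton fg.
move=> A /=; rewrite fa => /gc gA.
by apply: filterS2 fg gA => x /= ->.
Qed.

Section WordContinuity.
Variable T : topologicalType.
Implicit Types (F G : T -> seq T) (a : T).

Definition word_continuous_at F a :=
  (\forall x \near a, size (F x) = size (F a)) /\
  (forall (d : T) (i : nat), (i < size (F a))%N ->
     {for a, continuous (fun x => nth d (F x) i)}).

Lemma word_continuous_at_near_eq F G a :
  (\forall x \near a, F x = G x) ->
  word_continuous_at G a -> word_continuous_at F a.
Proof.
move=> FG [sizeG contG]; have Fa := nbhs_singleton FG; split.
  by apply: filterS2 FG sizeG => x -> ->; rewrite Fa.
move=> d i; rewrite Fa => /(contG d); apply: continuous_near_eq.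
by apply: filterS FG => x ->.
Qed.

Lemma word_continuous_at_nil a : word_continuous_at (fun _ => [::]) a.
Proof. by split; first exact: nearW. Qed.

Lemma word_continuous_at_seq1 a : word_continuous_at (fun x => [:: x]) a.
Proof. by split=> [|d [|i] //]; [exact: nearW | move=> _; exact: cvg_id]. Qed.

Lemma word_continuous_at_cat F G a :
  word_continuous_at F a -> word_continuous_at G a ->
  word_continuous_at (fun x => F x ++ G x) a.
Proof.
move=> [sizeF contF] [sizeG contG]; split.
  by apply: filterS2 sizeF sizeG => x eF eG; rewrite !size_cat eF eG.
move=> d i; rewrite size_cat => ltiFG.
have [ltiF | leFi] := ltnP i (size (F a)).
  apply: continuous_near_eq (contF d i ltiF).
  by apply: filterS sizeF => x eF; rewrite nth_cat eF ltiF.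
apply: continuous_near_eq (contG d (i - size (F a))%N _); last by lia.
by apply: filterS sizeF => x eF; rewrite nth_cat eF ltnNge leFi.
Qed.

Lemma word_continuous_at_comp F (h : T -> T) a :
  (forall y, word_continuous_at F y) -> {for a, continuous h} ->
  word_continuous_at (fun x => F (h x)) a.
Proof.
move=> contF hc; have [sizeF letterF] := contF (h a).
split; first exact: hc _ sizeF.
by move=> d i /(letterF d) /(continuous_comp hc).
Qed.

Lemma word_continuous_at_flatten_map F G a :
  (forall y, word_continuous_at F y) -> word_continuous_at G a ->
  word_continuous_at (fun x => flatten (map F (G x))) a.
Proof.
move=> contF [sizeG contG]; set n := size (G a).
have idx_cont ms : all (fun m => m < n)%N ms ->
    word_continuous_at (fun x => flatten [seq F (nth a (G x) m) | m <- ms]) a.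
  elim: ms => [_|m ms IH /andP[ltmn ltmsn]]; first exact: word_continuous_at_nil.
  exact: word_continuous_at_cat (word_continuous_at_comp contF (contG a m ltmn))
                                (IH ltmsn).
apply: word_continuous_at_near_eq (idx_cont (iota 0 n) _).
  apply: filterS sizeG => x eG.
  by rewrite -[in LHS](mkseq_nth a (G x)) eG /mkseq -map_comp.
by apply/allP => m; rewrite mem_iota add0n => /andP[].
Qed.

Lemma window_continuous_at F a (d : T) (p n : nat) :
  word_continuous_at F a -> (p + n <= size (F a))%N ->
  {for a, continuous
     (fun x => (fun i : 'I_n => nth d (F x) (p + i)) : {ptws 'I_n -> T})}.
Proof.
move=> [_ contF] le_pn; apply: ptws_cvgP => i; apply: contF.
by apply: leq_trans le_pn; rewrite ltn_add2l.
Qed.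

End WordContinuity.
Arguments word_continuous_at {T}.

Lemma gen_subst_word_continuous (T : topologicalType) (sigma : T -> seq T) :
  gen_subst sigma -> forall a, word_continuous_at sigma a.
Proof.
move=> [_ size_near letter_cont] a; split; first exact: size_near.
move=> d i ltia.
have /subspace_continuousP /(_ a ltia) := letter_cont i d.
by rewrite within_interior //; apply: filterS (size_near a) => x /= ->.
Qed.

Lemma subst_iter_word_continuous (T : topologicalType) (sigma : T -> seq T) j a :
  gen_subst sigma -> word_continuous_at (subst_iter sigma j) a.
Proof.
move=> /gen_subst_word_continuous contS; elim: j a => [|j IH] a.
  exact: word_continuous_at_seq1.
exact: word_continuous_at_flatten_map contS (IH a).
Qed.

Lemma subst_word_cat (T : Type) (sigma : T -> seq T) s1 s2 :
  subst_word sigma (s1 ++ s2) = subst_word sigma s1 ++ subst_word sigma s2.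
Proof. by rewrite /subst_word map_cat flatten_cat. Qed.

Lemma iter_subst_word (T : Type) (sigma : T -> seq T) j w :
  iter j (subst_word sigma) w = flatten (map (subst_iter sigma j) w).
Proof.
elim: j w => [|j IH] w; first by elim: w => //= x w {1}->.
rewrite iterS IH; elim: w => // x w IHw.
by rewrite /= subst_word_cat IHw.
Qed.

Lemma subst_iterD (T : Type) (sigma : T -> seq T) j k b :
  subst_iter sigma (j + k) b =
  flatten (map (subst_iter sigma j) (subst_iter sigma k b)).
Proof. by rewrite {1}/subst_iter iterD iter_subst_word. Qed.

Lemma infix_flatten_map (T : eqType) (F : T -> seq T) x s :
  x \in s -> infix (F x) (flatten (map F s)).
Proof.
elim: s => // y s IH; rewrite in_cons => /orP[/eqP->|xs] /=.
  exact: infix_catr (infix_refl _).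
exact: infix_catl (IH xs).
Qed.

Lemma word_of_window (T : Type) n (d : T) (t : seq T) p :
  (p + n <= size t)%N ->
  word_of (fun i : 'I_n => nth d t (p + i)) = take n (drop p t).
Proof.
move=> le_pn; rewrite /word_of.
rewrite (@eq_map _ _ _ ((fun i => nth d t (p + i)) \o val)) //.
rewrite map_comp val_enum_ord; apply: (@eq_from_nth _ d).
  by rewrite size_map size_iota size_take size_drop; case: ltnP; lia.
move=> i; rewrite size_map size_iota => ltin.
by rewrite (nth_map 0) ?size_iota // nth_iota // nth_take // nth_drop add0n.
Qed.

Lemma window_infix (T : eqType) n (d : T) (t : seq T) p :
  (p + n <= size t)%N -> infix (word_of (fun i : 'I_n => nth d t (p + i))) t.
Proof.
move=> le_pn; apply/infixP; exists (take p t), (drop (p + n) t).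
by rewrite word_of_window // addnC -drop_drop !cat_take_drop.
Qed.

Lemma infix_word_ofP {T : eqType} {n : nat} (f : 'I_n -> T) (d : T) s :
  infix (word_of f) s ->
  exists2 p, (p + n <= size s)%N & forall i : 'I_n, f i = nth d s (p + i).
Proof.
have size_f : size (word_of f) = n by rewrite size_map size_enum_ord.
move=> /infixP [s1 [s2 ->]]; exists (size s1).
  by rewrite !size_cat size_f addnA leq_addr.
move=> i; rewrite nth_cat ltnNge leq_addr /= addKn nth_cat size_f ltn_ord.
by rewrite /word_of (nth_map i) ?size_enum_ord // nth_ord_enum.
Qed.

Definition factor_words {T : topologicalType} (sigma : T -> seq T) (b : T) (n : nat) :
    set {ptws 'I_n -> T} :=
  [set g | exists j : nat, infix (word_of g) (subst_iter sigma j b)].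
Arguments factor_words {T} sigma b n.

Lemma factor_words_closure (T : topologicalType) (sigma : T -> seq T) a b j n
    (f : 'I_n -> T) :
  gen_subst sigma -> primitive sigma ->
  infix (word_of f) (subst_iter sigma j a) ->
  closure (factor_words sigma b n) (f : {ptws 'I_n -> T}).
Proof.
move=> substS primS /(infix_word_ofP f a) [p le_pn fE].
pose window x : {ptws 'I_n -> T} := fun i => nth a (subst_iter sigma j x) (p + i).
have window_a : window a = f by apply: functional_extensionality_dep => i; rewrite fE.
have contSj := subst_iter_word_continuous j a substS.
have window_cont := window_continuous_at a p contSj le_pn.
move=> B; rewrite -window_a => /window_cont nbhs_B.
pose V := window @^-1` B `&`
  [set x | size (subst_iter sigma j x) = size (subst_iter sigma j a)].
have nbhs_V : nbhs a V by apply: filterI => //; case: contSj.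
have [k occurs] := primS V° (@open_interior _ V)
  (ex_intro _ a (nbhs_singleton (nbhs_interior nbhs_V))).
have [x xSkb /interior_subset [Bx size_x]] := occurs b k (leqnn k).
exists (window x); split => //; exists (j + k)%N.
apply: (@infix_trans _ (subst_iter sigma j x)).
  by apply: window_infix; rewrite size_x.
by rewrite subst_iterD; exact: infix_flatten_map.
Qed.

Lemma lang_at_sub (T : topologicalType) (sigma : T -> seq T) :
  gen_subst sigma -> primitive sigma ->
  forall a b, lang_at sigma a `<=` lang_at sigma b.
Proof.
move=> substS primS a b w [n [f [n_gt0 -> f_cl]]]; exists n, f; split => //.
move: f_cl; rewrite [X in _ -> X _](closure_id _).1; last exact: closed_closure.
apply: closureS => g [j g_factor].
exact: factor_words_closure substS primS g_factor.
Qed.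

Theorem mainTheorem18 (R : realType) (K : metricType R) (sigma : K -> seq K) :
  alphabet_space K -> gen_subst sigma -> primitive sigma ->
  forall a b : K, lang_at sigma a = lang_at sigma b /\ lang_at sigma b = lang sigma.
Proof.
move=> _ substS primS a b; have incl := lang_at_sub substS primS; split.
  by apply/seteqP; split; exact: incl.
apply/seteqP; split=> [w Lw | w [c _ Lw]]; first by exists b.
exact: incl Lw.
Qed.
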